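(* Under the standing assumptions below, the relation $\preceq$ is a total order on $I$.
   Context: Standing assumptions: $I$ is a finite set of weighted constraints with default values on a finite domain $D$ (each constraint $c$ has a finite variable set $\mathrm{var}(c)$) such that distinct constraints have distinct variable sets, the hypergraph $\mathcal H(I)=(\mathrm{var}(I),\{\mathrm{var}(c)\mid c\in I\})$ is $\beta$-acyclic, and $(x_1,\dots,x_n)$ is a $\beta$-elimination order of $\mathcal H(I)$ (an enumeration of $\mathrm{var}(I)$ such that, for each $k$, $x_{k+1}$ is a nest point—i.e. the edges containing it are totally ordered by inclusion—of the hypergraph with vertices $\mathrm{var}(I)\setminus X_k$ and edges $\{e\setminus X_k\}\setminus\{\emptyset\}$). Let $X_k=\{x_1,\dots,x_k\}$ ($X_0=\emptyset$). For $c,d\in I$, write $c\prec d$ if there exists $k\in\{0,\dots,n\}$ with $\mathrm{var}(c)\setminus X_k\subsetneq\mathrm{var}(d)\setminus X_k$, and $c\preceq d$ if $c\prec d$ or $c=d$. *)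

From mathcomp Require Import all_boot.
Set Implicit Arguments. Unset Strict Implicit. Unset Printing Implicit Defensive.

Section Hypergraphs.
Variable V : finType.

Definition residual_edges (E : {set {set V}}) (X : {set V}) : {set {set V}} :=
  [set e :\: X | e in E] :\ set0.

Definition nest_point (x : V) (F : {set {set V}}) : Prop :=
  forall e1 e2, e1 \in F -> e2 \in F -> x \in e1 -> x \in e2 ->
    (e1 \subset e2) \/ (e2 \subset e1).

Definition beta_elim_order (Vs : {set V}) (E : {set {set V}}) (xs : seq V) : Prop :=
  [/\ uniq xs, [set x in xs] = Vs &
      forall (pre : seq V) (x : V) (suf : seq V),
        xs = pre ++ x :: suf ->
        nest_point x (residual_edges E [set y in pre])].

(* beta-acyclicity, via the (standard) characterization as existence of a
   beta-elimination order *)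
Definition beta_acyclic (Vs : {set V}) (E : {set {set V}}) : Prop :=
  exists xs, beta_elim_order Vs E xs.

End Hypergraphs.

Section Constraints.
Variables (V C : finType) (var : C -> {set V}).

Definition vars_of (I : {set C}) : {set V} := \bigcup_(c in I) var c.
Definition hyp_edges (I : {set C}) : {set {set V}} := [set var c | c in I].

Definition Xk (xs : seq V) (k : nat) : {set V} := [set x in take k xs].

Definition cprec (xs : seq V) (c d : C) : Prop :=
  exists k, k <= size xs /\ (var c :\: Xk xs k) \proper (var d :\: Xk xs k).

Definition cpreceq (xs : seq V) (c d : C) : Prop := cprec xs c d \/ c = d.

End Constraints.

From mathcomp Require Import all_boot.

Set Implicit Arguments.
Unset Strict Implicit.
Unset Printing Implicit Defensive.

(* Monotonicity: once [var c :\: X_k] is a proper subset of [var d :\: X_k],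
   inclusion persists for all larger k, which gives antisymmetry and
   transitivity.  Totality: [var c :\: X_0] and [var d :\: X_0] differ for
   distinct constraints, while [var c :\: X_n] and [var d :\: X_n] are both
   empty; at the last step k where they still differ, deleting the single
   vertex x_(k+1) makes them equal, so one is a proper subset of the other. *)

Lemma setD1_eq_proper (T : finType) (A B : {set T}) (x : T) :
  A :\ x = B :\ x -> A != B -> A \proper B \/ B \proper A.
Proof.
move=> eqAB neqAB.
have notin_id (D : {set T}) : x \notin D -> D :\ x = D.
  by move=> xD; apply/setP=> y; rewrite !inE; case: eqP => // ->; rewrite (negbTE xD).
case xA: (x \in A); case xB: (x \in B).
- by case/eqP: neqAB; rewrite -(setD1K xA) -(setD1K xB) eqAB.
- by right; rewrite -(notin_id B) ?xB // -eqAB properD1.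
- by left; rewrite -(notin_id A) ?xA // eqAB properD1.
- by case/eqP: neqAB; rewrite -(notin_id A) ?xA // -(notin_id B) ?xB // eqAB.
Qed.

Lemma setD_subset_mono (T : finType) (A B X Y : {set T}) :
  X \subset Y -> A :\: X \subset B :\: X -> A :\: Y \subset B :\: Y.
Proof.
move=> /subsetP XY /subsetP AXB; apply/subsetP => y; rewrite !inE => /andP[yY yA].
have yX : y \notin X by apply: contra yY; exact: XY.
by rewrite yY; have := AXB y; rewrite !inE yX yA => /(_ isT).
Qed.

Section Prefixes.
Variables (V : finType) (xs : seq V).

Lemma Xk0 : Xk xs 0 = set0.
Proof. by apply/setP=> y; rewrite !inE take0. Qed.

Lemma Xk_size : Xk xs (size xs) = [set x in xs].
Proof. by rewrite /Xk take_size. Qed.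

Lemma XkS (x0 : V) k : k < size xs -> Xk xs k.+1 = nth x0 xs k |: Xk xs k.
Proof. by move=> lt; apply/setP=> y; rewrite /Xk (take_nth x0 lt) !inE mem_rcons inE. Qed.

Lemma Xk_mono k k' : k <= k' -> Xk xs k \subset Xk xs k'.
Proof.
by move=> le; apply/subsetP=> y; rewrite !inE -(subnKC le) takeD mem_cat => ->.
Qed.

End Prefixes.

Section Precedence.
Variables (V C : finType) (var : C -> {set V}) (xs : seq V).

Local Notation res k c := (var c :\: Xk xs k).

Lemma proper_res_subset c d k k' :
  k <= k' -> res k c \proper res k d -> res k' c \subset res k' d.
Proof. by move=> le /proper_sub; apply: setD_subset_mono; exact: Xk_mono. Qed.

Lemma cprec_asym c d : cprec var xs c d -> ~ cprec var xs d c.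
Proof.
move=> [k [_ cd]] [k' [_ dc]].
have [le | /ltnW le] := leqP k k'.
  by move: dc; rewrite properE (proper_res_subset le cd) andbF.
by move: cd; rewrite properE (proper_res_subset le dc) andbF.
Qed.

Lemma cprec_trans c d e :
  cprec var xs c d -> cprec var xs d e -> cprec var xs c e.
Proof.
move=> [k [sk cd]] [k' [sk' de]].
have [le | /ltnW le] := leqP k k'.
  by exists k'; split=> //; apply: sub_proper_trans de; exact: proper_res_subset cd.
by exists k; split=> //; apply: proper_sub_trans cd _; exact: proper_res_subset de.
Qed.

Lemma res_step_proper c d k :
  k < size xs -> res k c != res k d -> res k.+1 c = res k.+1 d ->
  cprec var xs c d \/ cprec var xs d c.
Proof.
move=> lt neq eqS; have x0 : V by case: xs lt => // x.
have [cd | dc] : res k c \proper res k d \/ res k d \proper res k c.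
  apply: (@setD1_eq_proper _ _ _ (nth x0 xs k)) neq.
  by rewrite !setDDl ![_ :|: [set _]]setUC -XkS.
- by left; exists k; split=> //; exact: ltnW.
- by right; exists k; split=> //; exact: ltnW.
Qed.

Lemma cprec_total_from c d k :
  res (size xs) c = res (size xs) d -> k <= size xs -> res k c != res k d ->
  cprec var xs c d \/ cprec var xs d c.
Proof.
move=> eq_end; move: {2}(size xs - k) (erefl (size xs - k)) => m.
elim: m k => [|m IH] k hm le neq.
  by move: neq; rewrite (@anti_leq k (size xs)) ?eq_end ?eqxx // le -subn_eq0 hm.
have lt : k < size xs by rewrite -subn_gt0 hm.
have [eqS | neqS] := eqVneq (res k.+1 c) (res k.+1 d).
  exact: res_step_proper eqS.
by apply: (IH k.+1) => //; rewrite subnS hm.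
Qed.

End Precedence.

Theorem lemma3 (V C : finType) (var : C -> {set V}) (I : {set C}) (xs : seq V) :
  {in I &, injective var} ->
  beta_acyclic (vars_of var I) (hyp_edges var I) ->
  beta_elim_order (vars_of var I) (hyp_edges var I) xs ->
  [/\ {in I, forall c, cpreceq var xs c c},
      {in I &, forall c d, cpreceq var xs c d -> cpreceq var xs d c -> c = d},
      (forall c d e, c \in I -> d \in I -> e \in I ->
         cpreceq var xs c d -> cpreceq var xs d e -> cpreceq var xs c e) &
      {in I &, forall c d, cpreceq var xs c d \/ cpreceq var xs d c}].
Proof.
move=> var_inj _ [_ vars_xs _]; split.
- by move=> c _; right.
- by move=> c d _ _ [cd|//] [dc|//]; case: (cprec_asym cd).
- move=> c d e _ _ _ [cd|<-] [de|<-]; try by [left | right].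
  by left; exact: cprec_trans de.
move=> c d cI dI; have [-> | cd] := eqVneq c d; first by left; right.
have res_end e : e \in I -> var e :\: Xk xs (size xs) = set0.
  by move=> eI; apply/eqP; rewrite setD_eq0 Xk_size vars_xs (bigcup_sup e).
have res0_neq : var c :\: Xk xs 0 != var d :\: Xk xs 0.
  by rewrite Xk0 !setD0; apply: contra cd => /eqP /var_inj ->.
have res_end_eq : var c :\: Xk xs (size xs) = var d :\: Xk xs (size xs).
  by rewrite !res_end.
by case: (cprec_total_from res_end_eq (leq0n _) res0_neq); [left | right]; left.
Qed.
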